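(* Let $\mathbb{S}$ be the Sorgenfrey line. The symmetric product $\mathcal{F}_2(\mathbb{S})$ is homeomorphic to $\mathbb{S}^2$. In particular, $\mathcal{F}_2(\mathbb{S})$ is homogeneous.
   Context: The Sorgenfrey line $\mathbb{S}$ is the real line with the topology generated by half-open intervals $[a,b[$. For a space $X$, $\mathcal{F}_2(X)$ denotes the set of all nonempty subsets of $X$ of cardinality at most $2$, with the subspace topology inherited from the hyperspace of closed subsets of $X$ with the Vietoris topology. A space $Y$ is homogeneous if for all $x,y\in Y$ there is a homeomorphism $h:Y\to Y$ with $h(x)=y$. *)

From Stdlib Require Import Reals List.
Open Scope R_scope.

Record space := Space { carrier :> Type; is_open : (carrier -> Prop) -> Prop }.

Definition is_closed (X : space) (A : X -> Prop) : Prop :=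
  is_open X (fun x => ~ A x).

(* Topology generated by a subbase B: W is open iff every point of W lies in a
   finite intersection of members of B contained in W (empty intersection = whole space). *)
Definition generated {T : Type} (B : (T -> Prop) -> Prop) (W : T -> Prop) : Prop :=
  forall x, W x -> exists l : list (T -> Prop),
    Forall B l /\ Forall (fun S => S x) l /\
    (forall y, Forall (fun S => S y) l -> W y).

Definition sorgenfrey_open (U : R -> Prop) : Prop :=
  forall x, U x -> exists a b, a <= x < b /\ (forall y, a <= y < b -> U y).

Definition Sorgenfrey : space := Space R sorgenfrey_open.

Definition prod_space (X Y : space) : space :=
  Space (X * Y)%type (fun W => forall p, W p -> exists (U : X -> Prop) (V : Y -> Prop),
     is_open X U /\ is_open Y V /\ U (fst p) /\ V (snd p) /\
     (forall q, U (fst q) -> V (snd q) -> W q)).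

Definition subspace (Y : space) (P : Y -> Prop) : space :=
  Space {y : Y | P y} (fun W => exists V, is_open Y V /\ forall y, W y <-> V (proj1_sig y)).

Definition CL_carrier (X : space) : Type := {A : X -> Prop | is_closed X A}.

Definition vietoris_subbase (X : space) (S : CL_carrier X -> Prop) : Prop :=
  exists U : X -> Prop, is_open X U /\
    ((forall A, S A <-> (forall x, proj1_sig A x -> U x)) \/
     (forall A, S A <-> (exists x, proj1_sig A x /\ U x))).

Definition Vietoris (X : space) : space :=
  Space (CL_carrier X) (generated (vietoris_subbase X)).

Definition card_1_or_2 {T : Type} (A : T -> Prop) : Prop :=
  (exists x, A x) /\ (forall x y z, A x -> A y -> A z -> x = y \/ x = z \/ y = z).

Definition F2 (X : space) : space :=
  subspace (Vietoris X) (fun A => card_1_or_2 (proj1_sig A)).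

Definition continuous {X Y : space} (f : X -> Y) : Prop :=
  forall V, is_open Y V -> is_open X (fun x => V (f x)).

Definition homeomorphic (X Y : space) : Prop :=
  exists (f : X -> Y) (g : Y -> X),
    (forall x, g (f x) = x) /\ (forall y, f (g y) = y) /\ continuous f /\ continuous g.

Definition is_homeomorphism {X Y : space} (f : X -> Y) : Prop :=
  exists g : Y -> X,
    (forall x, g (f x) = x) /\ (forall y, f (g y) = y) /\ continuous f /\ continuous g.

Definition homogeneous (X : space) : Prop :=
  forall x y : X, exists h : X -> X, is_homeomorphism h /\ h x = y.

(* Sending {x, y} with x <= y to (x, y) identifies F_2(S) with the closed half-plane
   {x <= y} of the Sorgenfrey plane.  This half-plane is mapped onto S x S fibrewise,
   (x, y) |-> (x, psi x y).  Inside a unit cell the triangle {0 <= x <= y < 1} is the union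
   of the box [0,1/2) x [1/2,1), which is kept fixed, and of two half-size copies of itself:
   the lower-left one is sent recursively onto [0,1/2)^2, the upper-right one onto
   [1/2,1) x [0,1), and the diagonal collapses onto the edge {y = 0}.  Off the diagonal the
   recursion settles after finitely many halvings, which makes psi and its inverse chi
   continuous for the Sorgenfrey topology.  The cells [n,n+1) x [n+j,n+j+1), j >= 1, are
   translated onto the cells [n,n+1) x [k,k+1), k <> 0, along a bijection j |-> k.
   Homogeneity then comes from the translations of S x S. *)

From Stdlib Require Import Reals List Lra Lia ZArith.
From Stdlib Require Import ClassicalEpsilon Classical FunctionalExtensionality PropExtensionality ProofIrrelevance.
Import ListNotations.
Open Scope R_scope.

Lemma continuous_comp (X Y Z : space) (f : X -> Y) (g : Y -> Z) :
  continuous f -> continuous g -> continuous (fun x => g (f x)).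
Proof. intros Hf Hg V HV. apply (Hf (fun y => V (g y))), Hg, HV. Qed.

Lemma homogeneous_homeomorphic (X Y : space) :
  homeomorphic X Y -> homogeneous Y -> homogeneous X.
Proof.
  intros [f [g [Hgf [Hfg [Hf Hg]]]]] HY x y.
  destruct (HY (f x) (f y)) as [h [[k [Hkh [Hhk [Hh Hk]]]] Hhx]].
  exists (fun z => g (h (f z))). split.
  - exists (fun z => g (k (f z))). repeat split.
    + intros z. rewrite Hfg, Hkh. apply Hgf.
    + intros z. rewrite Hfg, Hhk. apply Hgf.
    + apply continuous_comp; [apply continuous_comp|]; assumption.
    + apply continuous_comp; [apply continuous_comp|]; assumption.
  - rewrite Hhx. apply Hgf.
Qed.

Definition sorg_nbhd (x : R) (P : R -> Prop) : Prop :=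
  exists d, 0 < d /\ forall s, x <= s < x + d -> P s.

Definition sorg_nbhd2 (x y : R) (P : R -> R -> Prop) : Prop :=
  exists d, 0 < d /\ forall s t, x <= s < x + d -> y <= t < y + d -> P s t.

Lemma sorgenfrey_open_interval (a b : R) : sorgenfrey_open (fun t => a <= t < b).
Proof. intros x Hx. exists a, b. auto. Qed.

Lemma sorg_nbhd_open (U : R -> Prop) x : sorgenfrey_open U -> U x -> sorg_nbhd x U.
Proof.
  intros HU Hx. destruct (HU x Hx) as [a [b [Hab HU']]].
  exists (b - x). split; [lra|]. intros s Hs. apply HU'. lra.
Qed.

Lemma sorgenfrey_open_nbhd (U : R -> Prop) :
  (forall x, U x -> sorg_nbhd x U) -> sorgenfrey_open U.
Proof.
  intros HU x Hx. destruct (HU x Hx) as [d [Hd HU']].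
  exists x, (x + d). split; [lra | exact HU'].
Qed.

Lemma sorg_nbhd_impl x (P Q : R -> Prop) :
  sorg_nbhd x P -> (forall s, P s -> Q s) -> sorg_nbhd x Q.
Proof. intros [d [Hd HP]] HPQ. exists d. auto. Qed.

Lemma sorg_nbhd_and x (P Q : R -> Prop) :
  sorg_nbhd x P -> sorg_nbhd x Q -> sorg_nbhd x (fun s => P s /\ Q s).
Proof.
  intros [d1 [Hd1 HP]] [d2 [Hd2 HQ]].
  exists (Rmin d1 d2). split; [apply Rmin_glb_lt; assumption|].
  pose proof (Rmin_l d1 d2). pose proof (Rmin_r d1 d2).
  intros s Hs. split; [apply HP | apply HQ]; lra.
Qed.

Lemma sorg_nbhd_lt x c : x < c -> sorg_nbhd x (fun s => s < c).
Proof. intros Hx. exists (c - x). split; intros; lra. Qed.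

Lemma sorg_nbhd_neq x a : x <> a -> sorg_nbhd x (fun s => s <> a).
Proof.
  intros Hxa. destruct (Rlt_dec a x).
  - exists 1. split; intros; lra.
  - exists (a - x). split; intros; lra.
Qed.

Lemma Zfloor_sorg_nbhd x : sorg_nbhd x (fun s => Zfloor s = Zfloor x).
Proof.
  destruct (Zfloor_bound x).
  exists (IZR (Zfloor x) + 1 - x). split; [lra|]. intros s Hs. apply Zfloor_eq. lra.
Qed.

Lemma sorg_nbhd2_and x y (P Q : R -> R -> Prop) :
  sorg_nbhd2 x y P -> sorg_nbhd2 x y Q -> sorg_nbhd2 x y (fun s t => P s t /\ Q s t).
Proof.
  intros [d1 [Hd1 HP]] [d2 [Hd2 HQ]].
  exists (Rmin d1 d2). split; [apply Rmin_glb_lt; assumption|].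
  pose proof (Rmin_l d1 d2). pose proof (Rmin_r d1 d2).
  intros s t Hs Ht. split; [apply HP | apply HQ]; lra.
Qed.

Lemma sorg_nbhd2_impl x y (P Q : R -> R -> Prop) :
  sorg_nbhd2 x y P -> (forall s t, x <= s -> y <= t -> P s t -> Q s t) -> sorg_nbhd2 x y Q.
Proof.
  intros [d [Hd HP]] HPQ. exists d. split; [assumption|].
  intros s t Hs Ht. apply HPQ; [lra | lra | auto].
Qed.

Lemma sorg_nbhd2_fst x y (P : R -> Prop) : sorg_nbhd x P -> sorg_nbhd2 x y (fun s _ => P s).
Proof. intros [d [Hd HP]]. exists d. auto. Qed.

Lemma sorg_nbhd2_snd x y (P : R -> Prop) : sorg_nbhd y P -> sorg_nbhd2 x y (fun _ t => P t).
Proof. intros [d [Hd HP]]. exists d. auto. Qed.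

Lemma sorg_nbhd2_comp (f g : R -> R -> R) x y (P : R -> R -> Prop) :
  (forall s t, x <= s -> y <= t -> f x y <= f s t <= f x y + 2 * ((s - x) + (t - y))) ->
  (forall s t, x <= s -> y <= t -> g x y <= g s t <= g x y + 2 * ((s - x) + (t - y))) ->
  sorg_nbhd2 (f x y) (g x y) P -> sorg_nbhd2 x y (fun s t => P (f s t) (g s t)).
Proof.
  intros Hf Hg [d [Hd HP]]. exists (d / 4). split; [lra|].
  intros s t Hs Ht. specialize (Hf s t ltac:(lra) ltac:(lra)).
  specialize (Hg s t ltac:(lra) ltac:(lra)). apply HP; lra.
Qed.

Lemma sorg_nbhd2_double x y P :
  sorg_nbhd2 (2 * x) (2 * y) P -> sorg_nbhd2 x y (fun s t => P (2 * s) (2 * t)).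
Proof. apply (sorg_nbhd2_comp (fun s _ => 2 * s) (fun _ t => 2 * t)); intros; lra. Qed.

Lemma sorg_nbhd2_double_sub1 x y P :
  sorg_nbhd2 (2 * x - 1) (2 * y - 1) P ->
  sorg_nbhd2 x y (fun s t => P (2 * s - 1) (2 * t - 1)).
Proof. apply (sorg_nbhd2_comp (fun s _ => 2 * s - 1) (fun _ t => 2 * t - 1)); intros; lra. Qed.

Lemma sorg_nbhd2_double_sub1_fst x y P :
  sorg_nbhd2 (2 * x - 1) y P -> sorg_nbhd2 x y (fun s t => P (2 * s - 1) t).
Proof. apply (sorg_nbhd2_comp (fun s _ => 2 * s - 1) (fun _ t => t)); intros; lra. Qed.

Lemma sorg_nbhd2_shift a x y P :
  sorg_nbhd2 (x - a) (y - a) P -> sorg_nbhd2 x y (fun s t => P (s - a) (t - a)).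
Proof. apply (sorg_nbhd2_comp (fun s _ => s - a) (fun _ t => t - a)); intros; lra. Qed.

Lemma sorg_nbhd2_shift_fst a x y P :
  sorg_nbhd2 (x - a) y P -> sorg_nbhd2 x y (fun s t => P (s - a) t).
Proof. apply (sorg_nbhd2_comp (fun s _ => s - a) (fun _ t => t)); intros; lra. Qed.

Lemma sorg_nbhd2_graph (g : R -> R -> R) (D P : R -> R -> Prop) x y :
  (forall eps, 0 < eps -> sorg_nbhd2 x y (fun s t => D s t -> g x y <= g s t < g x y + eps)) ->
  sorg_nbhd2 x (g x y) P -> sorg_nbhd2 x y (fun s t => D s t -> P s (g s t)).
Proof.
  intros Hg [d [Hd HP]].
  apply (sorg_nbhd2_impl _ _ _ _ (sorg_nbhd2_and _ _ _ _ (Hg d Hd)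
           (sorg_nbhd2_fst x y _ (sorg_nbhd_lt x (x + d) ltac:(lra))))).
  intros s t Hs _ [Hgst Hsd] HD. apply HP; [lra | apply Hgst, HD].
Qed.

Lemma pow_half_pos n : 0 < (/2) ^ n.
Proof. apply pow_lt; lra. Qed.

Lemma pow_half_lt t : 0 < t -> exists n, (/2) ^ n < t.
Proof.
  intros Ht. destruct (pow_lt_1_zero (/2) ltac:(rewrite Rabs_right; lra) t Ht) as [n Hn].
  exists n. specialize (Hn n (le_n n)). rewrite Rabs_right in Hn; [exact Hn|].
  left; apply pow_half_pos.
Qed.

(* The value on which [f] is eventually constant, or an unspecified [f n] if there is none. *)
Definition eventual (f : nat -> R) : R :=
  f (epsilon (inhabits 0%nat) (fun n => forall m, (n <= m)%nat -> f m = f n)).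

Lemma eventual_ind (Q : R -> Prop) (f : nat -> R) : (forall n, Q (f n)) -> Q (eventual f).
Proof. intros H. apply H. Qed.

Lemma eventual_settled (P : nat -> Prop) (f : nat -> R) n :
  (forall k, P k -> P (S k) /\ f (S k) = f k) -> P n -> eventual f = f n.
Proof.
  intros Hstep Hn.
  assert (Hconst : forall m, (n <= m)%nat -> f m = f n).
  { intros m Hm. enough (P m /\ f m = f n) by tauto.
    induction Hm as [|m _ [Hm Em]]; [auto|].
    destruct (Hstep m Hm) as [HSm ESm]. split; congruence. }
  pose proof (epsilon_spec (inhabits 0%nat) (fun n => forall m, (n <= m)%nat -> f m = f n)
                (ex_intro _ n Hconst)) as Hk.
  unfold eventual. set (k := epsilon _ _) in *.
  rewrite <- (Hk (Nat.max n k)) by lia. apply Hconst; lia.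
Qed.

Ltac case_half :=
  repeat match goal with |- context [Rlt_dec ?a (1/2)] => destruct (Rlt_dec a (1/2)) end.

(* The base values 0 of [psi_n] and [u] of [chi_n] are the images of the diagonal and of
   the edge {w = 0}. *)
Fixpoint psi_n (n : nat) (x y : R) : R :=
  match n with
  | O => 0
  | S n =>
      if Rlt_dec x (1/2) then if Rlt_dec y (1/2) then psi_n n (2 * x) (2 * y) / 2 else y
      else psi_n n (2 * x - 1) (2 * y - 1)
  end.

Fixpoint chi_n (n : nat) (u w : R) : R :=
  match n with
  | O => u
  | S n =>
      if Rlt_dec u (1/2) then if Rlt_dec w (1/2) then chi_n n (2 * u) (2 * w) / 2 else w
      else (chi_n n (2 * u - 1) w + 1) / 2
  end.

Fixpoint psi_settled (n : nat) (x y : R) : Prop :=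
  match n with
  | O => False
  | S n =>
      x < 1/2 <= y \/ (x < 1/2 /\ y < 1/2 /\ psi_settled n (2 * x) (2 * y)) \/
      (1/2 <= x /\ psi_settled n (2 * x - 1) (2 * y - 1))
  end.

Fixpoint chi_settled (n : nat) (u w : R) : Prop :=
  match n with
  | O => False
  | S n =>
      u < 1/2 <= w \/ (u < 1/2 /\ w < 1/2 /\ chi_settled n (2 * u) (2 * w)) \/
      (1/2 <= u /\ chi_settled n (2 * u - 1) w)
  end.

Lemma psi_n_S n x y : psi_n (S n) x y =
  if Rlt_dec x (1/2) then if Rlt_dec y (1/2) then psi_n n (2 * x) (2 * y) / 2 else y
  else psi_n n (2 * x - 1) (2 * y - 1).
Proof. reflexivity. Qed.

Lemma chi_n_S n u w : chi_n (S n) u w =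
  if Rlt_dec u (1/2) then if Rlt_dec w (1/2) then chi_n n (2 * u) (2 * w) / 2 else w
  else (chi_n n (2 * u - 1) w + 1) / 2.
Proof. reflexivity. Qed.

Lemma psi_n_nonneg n x y : 0 <= psi_n n x y.
Proof.
  revert x y; induction n as [|n IH]; intros x y; simpl; [lra|].
  pose proof (IH (2 * x) (2 * y)). pose proof (IH (2 * x - 1) (2 * y - 1)). case_half; lra.
Qed.

Lemma psi_n_lt_1 n x y : y < 1 -> psi_n n x y < 1.
Proof.
  revert x y; induction n as [|n IH]; intros x y Hy; simpl; [lra|].
  case_half; [pose proof (IH (2 * x) (2 * y)) | | pose proof (IH (2 * x - 1) (2 * y - 1))]; lra.
Qed.

Lemma psi_n_diag n x : psi_n n x x = 0.
Proof.
  revert x; induction n as [|n IH]; intros x; simpl; [lra|].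
  rewrite !IH. case_half; lra.
Qed.

Lemma chi_n_zero n u : chi_n n u 0 = u.
Proof.
  revert u; induction n as [|n IH]; intros u; simpl; [lra|].
  rewrite Rmult_0_r, !IH. case_half; lra.
Qed.

Lemma chi_n_ge n u w : u <= chi_n n u w.
Proof.
  revert u w; induction n as [|n IH]; intros u w; simpl; [lra|].
  pose proof (IH (2 * u) (2 * w)). pose proof (IH (2 * u - 1) w). case_half; lra.
Qed.

Lemma chi_n_lt_1 n u w : u < 1 -> w < 1 -> chi_n n u w < 1.
Proof.
  revert u w; induction n as [|n IH]; intros u w Hu Hw; simpl; [lra|].
  case_half; [pose proof (IH (2 * u) (2 * w)) | | pose proof (IH (2 * u - 1) w)]; lra.
Qed.

Lemma psi_settled_succ n x y :
  psi_settled n x y -> psi_settled (S n) x y /\ psi_n (S n) x y = psi_n n x y.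
Proof.
  revert x y; induction n as [|n IH]; intros x y H; [destruct H|].
  rewrite (psi_n_S (S n) x y), (psi_n_S n x y).
  destruct H as [H | [[Hx [Hy H]] | [Hx H]]].
  - split; [left; exact H | case_half; lra].
  - destruct (IH _ _ H) as [HS E]. split; [right; left; auto | case_half; try lra; rewrite E; lra].
  - destruct (IH _ _ H) as [HS E]. split; [right; right; auto | case_half; try lra; exact E].
Qed.

Lemma chi_settled_succ n u w :
  chi_settled n u w -> chi_settled (S n) u w /\ chi_n (S n) u w = chi_n n u w.
Proof.
  revert u w; induction n as [|n IH]; intros u w H; [destruct H|].
  rewrite (chi_n_S (S n) u w), (chi_n_S n u w).
  destruct H as [H | [[Hu [Hw H]] | [Hu H]]].
  - split; [left; exact H | case_half; lra].
  - destruct (IH _ _ H) as [HS E]. split; [right; left; auto | case_half; try lra; rewrite E; lra].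
  - destruct (IH _ _ H) as [HS E]. split; [right; right; auto | case_half; try lra; rewrite E; lra].
Qed.

Lemma psi_settled_of_gap n x y :
  0 <= x -> x < y -> y < 1 -> (/2) ^ n <= y - x -> psi_settled n x y.
Proof.
  revert x y; induction n as [|n IH]; intros x y Hx Hxy Hy Hn; simpl in Hn |- *; [lra|].
  pose proof (pow_half_pos n).
  destruct (Rlt_dec x (1/2)); [destruct (Rlt_dec y (1/2))|].
  - right; left. repeat split; try lra. apply IH; lra.
  - left; lra.
  - right; right. split; [lra|]. apply IH; lra.
Qed.

Lemma psi_settled_exists x y : 0 <= x -> x < y -> y < 1 -> exists n, psi_settled n x y.
Proof.
  intros Hx Hxy Hy. destruct (pow_half_lt (y - x)) as [n Hn]; [lra|].
  exists n. apply psi_settled_of_gap; lra.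
Qed.

Lemma chi_settled_exists u w : 0 <= u < 1 -> 0 < w < 1 -> exists n, chi_settled n u w.
Proof.
  intros Hu Hw. destruct (pow_half_lt w) as [k Hk]; [lra|].
  revert u w Hu Hw Hk; induction k as [|k IHk]; intros u w Hu Hw Hk; [simpl in Hk; lra|].
  destruct (pow_half_lt (1 - u)) as [j Hj]; [lra|].
  revert u Hu Hj; induction j as [|j IHj]; intros u Hu Hj; [simpl in Hj; lra|].
  simpl in Hk, Hj. pose proof (pow_half_pos k). pose proof (pow_half_pos j).
  destruct (Rlt_dec u (1/2)); [destruct (Rlt_dec w (1/2))|].
  - destruct (IHk (2 * u) (2 * w)) as [m Hm]; try lra. exists (S m). right; left; auto.
  - exists 1%nat. left; lra.
  - destruct (IHj (2 * u - 1)) as [m Hm]; try lra. exists (S m). right; right; split; [lra | auto].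
Qed.

Lemma psi_n_chi_n n u w : chi_settled n u w -> 0 <= u < 1 -> 0 <= w < 1 ->
  psi_settled n u (chi_n n u w) /\ psi_n n u (chi_n n u w) = w.
Proof.
  revert u w; induction n as [|n IH]; intros u w H Hu Hw; [destruct H|].
  destruct H as [H | [[Hu' [Hw' H]] | [Hu' H]]].
  - assert (E : chi_n (S n) u w = w) by (simpl; case_half; lra).
    rewrite E. split; [left; lra | simpl; case_half; lra].
  - destruct (IH _ _ H) as [HS HE]; try lra.
    pose proof (chi_n_lt_1 n (2 * u) (2 * w) ltac:(lra) ltac:(lra)).
    assert (E : chi_n (S n) u w = chi_n n (2 * u) (2 * w) / 2) by (simpl; case_half; lra).
    rewrite E. set (v := chi_n n (2 * u) (2 * w)) in *.
    replace (2 * (v / 2)) with v in * by field.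
    split; [right; left; repeat split; try lra; replace (2 * (v / 2)) with v by field; exact HS|].
    simpl. replace (2 * (v / 2)) with v by field. case_half; lra.
  - destruct (IH _ _ H) as [HS HE]; try lra.
    assert (E : chi_n (S n) u w = (chi_n n (2 * u - 1) w + 1) / 2) by (simpl; case_half; lra).
    rewrite E. set (v := chi_n n (2 * u - 1) w) in *.
    replace (2 * ((v + 1) / 2) - 1) with v by field.
    split; [right; right; split; [lra|]; replace (2 * ((v + 1) / 2) - 1) with v by field; exact HS|].
    simpl. replace (2 * ((v + 1) / 2) - 1) with v by field. case_half; lra.
Qed.

Lemma chi_n_psi_n n x y : psi_settled n x y -> 0 <= x -> y < 1 ->
  chi_settled n x (psi_n n x y) /\ chi_n n x (psi_n n x y) = y.
Proof.
  revert x y; induction n as [|n IH]; intros x y H Hx Hy; [destruct H|].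
  destruct H as [H | [[Hx' [Hy' H]] | [Hx' H]]].
  - assert (E : psi_n (S n) x y = y) by (simpl; case_half; lra).
    rewrite E. split; [left; lra | simpl; case_half; lra].
  - destruct (IH _ _ H) as [HS HE]; try lra.
    pose proof (psi_n_lt_1 n (2 * x) (2 * y) ltac:(lra)).
    pose proof (psi_n_nonneg n (2 * x) (2 * y)).
    assert (E : psi_n (S n) x y = psi_n n (2 * x) (2 * y) / 2) by (simpl; case_half; lra).
    rewrite E. set (v := psi_n n (2 * x) (2 * y)) in *.
    split; [right; left; repeat split; try lra; replace (2 * (v / 2)) with v by field; exact HS|].
    simpl. replace (2 * (v / 2)) with v by field. case_half; lra.
  - destruct (IH _ _ H) as [HS HE]; try lra.
    assert (E : psi_n (S n) x y = psi_n n (2 * x - 1) (2 * y - 1)) by (simpl; case_half; lra).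
    rewrite E. split; [right; right; auto | simpl; case_half; lra].
Qed.

Lemma psi_n_right_cont n x y : psi_settled n x y -> forall eps, 0 < eps ->
  sorg_nbhd2 x y (fun s t => psi_settled n s t /\ psi_n n x y <= psi_n n s t < psi_n n x y + eps).
Proof.
  revert x y; induction n as [|n IH]; intros x y H eps Heps; [destruct H|].
  destruct H as [[Hx Hy] | [[Hx [Hy H]] | [Hx H]]].
  - apply (sorg_nbhd2_impl _ _ _ _ (sorg_nbhd2_and _ _ _ _
      (sorg_nbhd2_fst x y _ (sorg_nbhd_lt x (1/2) Hx))
      (sorg_nbhd2_snd x y _ (sorg_nbhd_lt y (y + eps) ltac:(lra))))).
    intros s t Hs Ht [Hs' Ht']. split; [left; lra | simpl; case_half; lra].
  - apply (sorg_nbhd2_impl _ _ _ _ (sorg_nbhd2_and _ _ _ _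
      (sorg_nbhd2_double _ _ _ (IH _ _ H (2 * eps) ltac:(lra)))
      (sorg_nbhd2_and _ _ _ _ (sorg_nbhd2_fst x y _ (sorg_nbhd_lt x (1/2) Hx))
                              (sorg_nbhd2_snd x y _ (sorg_nbhd_lt y (1/2) Hy))))).
    intros s t Hs Ht [[HS Hv] [Hs' Ht']].
    split; [right; left; auto | simpl; case_half; lra].
  - apply (sorg_nbhd2_impl _ _ _ _ (sorg_nbhd2_double_sub1 _ _ _ (IH _ _ H eps Heps))).
    intros s t Hs Ht [HS Hv].
    split; [right; right; split; [lra | auto] | simpl; case_half; lra].
Qed.

Lemma chi_n_right_cont n u w : chi_settled n u w -> forall eps, 0 < eps ->
  sorg_nbhd2 u w (fun s t => chi_settled n s t /\ chi_n n u w <= chi_n n s t < chi_n n u w + eps).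
Proof.
  revert u w; induction n as [|n IH]; intros u w H eps Heps; [destruct H|].
  destruct H as [[Hu Hw] | [[Hu [Hw H]] | [Hu H]]].
  - apply (sorg_nbhd2_impl _ _ _ _ (sorg_nbhd2_and _ _ _ _
      (sorg_nbhd2_fst u w _ (sorg_nbhd_lt u (1/2) Hu))
      (sorg_nbhd2_snd u w _ (sorg_nbhd_lt w (w + eps) ltac:(lra))))).
    intros s t Hs Ht [Hs' Ht']. split; [left; lra | simpl; case_half; lra].
  - apply (sorg_nbhd2_impl _ _ _ _ (sorg_nbhd2_and _ _ _ _
      (sorg_nbhd2_double _ _ _ (IH _ _ H (2 * eps) ltac:(lra)))
      (sorg_nbhd2_and _ _ _ _ (sorg_nbhd2_fst u w _ (sorg_nbhd_lt u (1/2) Hu))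
                              (sorg_nbhd2_snd u w _ (sorg_nbhd_lt w (1/2) Hw))))).
    intros s t Hs Ht [[HS Hv] [Hs' Ht']].
    split; [right; left; auto | simpl; case_half; lra].
  - apply (sorg_nbhd2_impl _ _ _ _ (sorg_nbhd2_double_sub1_fst _ _ _ (IH _ _ H (2 * eps) ltac:(lra)))).
    intros s t Hs Ht [HS Hv].
    split; [right; right; split; [lra | auto] | simpl; case_half; lra].
Qed.

Lemma psi_n_small_near_diag k x : 0 <= x < 1 ->
  sorg_nbhd2 x x (fun s t => s <= t -> forall n, psi_n n s t < (/2) ^ k).
Proof.
  revert x; induction k as [|k IHk]; intros x Hx.
  - exists (1 - x). split; [lra|]. intros s t _ Ht _ n. apply psi_n_lt_1. lra.
  - change ((/2) ^ S k) with (/2 * (/2) ^ k). pose proof (pow_half_pos k).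
    destruct (pow_half_lt (1 - x)) as [j Hj]; [lra|].
    revert x Hx Hj; induction j as [|j IHj]; intros x Hx Hj; [simpl in Hj; lra|].
    simpl in Hj. pose proof (pow_half_pos j).
    destruct (Rlt_dec x (1/2)) as [Hlt | Hge].
    + apply (sorg_nbhd2_impl _ _ _ _ (sorg_nbhd2_and _ _ _ _
        (sorg_nbhd2_double _ _ _ (IHk (2 * x) ltac:(lra)))
        (sorg_nbhd2_snd x x _ (sorg_nbhd_lt x (1/2) Hlt)))).
      intros s t Hs _ [Hv Ht] Hst [|n]; simpl; [lra|].
      specialize (Hv ltac:(lra) n). case_half; lra.
    + apply (sorg_nbhd2_impl _ _ _ _ (sorg_nbhd2_double_sub1 _ _ _ (IHj (2 * x - 1) ltac:(lra) ltac:(lra)))).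
      intros s t Hs _ Hv Hst [|n]; simpl; [lra|].
      specialize (Hv ltac:(lra) n). case_half; lra.
Qed.

Lemma chi_n_small_near_zero k u : 0 <= u < 1 ->
  sorg_nbhd2 u 0 (fun s t => forall n, chi_n n s t < u + (/2) ^ k).
Proof.
  revert u; induction k as [|k IHk]; intros u Hu.
  - exists (1 - u). split; [lra|]. intros s t Hs Ht n.
    pose proof (chi_n_lt_1 n s t ltac:(lra) ltac:(lra)). simpl; lra.
  - change ((/2) ^ S k) with (/2 * (/2) ^ k). pose proof (pow_half_pos k).
    destruct (pow_half_lt (1 - u)) as [j Hj]; [lra|].
    revert u Hu Hj; induction j as [|j IHj]; intros u Hu Hj; [simpl in Hj; lra|].
    simpl in Hj. pose proof (pow_half_pos j).
    destruct (Rlt_dec u (1/2)) as [Hlt | Hge].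
    + assert (IH := IHk (2 * u) ltac:(lra)). rewrite <- (Rmult_0_r 2) in IH at 1.
      apply (sorg_nbhd2_impl _ _ _ _ (sorg_nbhd2_and _ _ _ _
        (sorg_nbhd2_double _ _ _ IH)
        (sorg_nbhd2_and _ _ _ _ (sorg_nbhd2_fst u 0 _ (sorg_nbhd_lt u (1/2) Hlt))
                                (sorg_nbhd2_snd u 0 _ (sorg_nbhd_lt 0 (/2 * (/2) ^ k) ltac:(lra)))))).
      intros s t Hs Ht [Hv [Hs' Ht']] [|n]; simpl.
      * specialize (Hv 0%nat). simpl in Hv. lra.
      * specialize (Hv n). case_half; lra.
    + apply (sorg_nbhd2_impl _ _ _ _ (sorg_nbhd2_double_sub1_fst _ _ _ (IHj (2 * u - 1) ltac:(lra) ltac:(lra)))).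
      intros s t Hs _ Hv [|n]; simpl.
      * specialize (Hv 0%nat). simpl in Hv. lra.
      * specialize (Hv n). case_half; lra.
Qed.

Definition psi01 (x y : R) : R := eventual (fun n => psi_n n x y).
Definition chi01 (u w : R) : R := eventual (fun n => chi_n n u w).

Lemma psi01_settled n x y : psi_settled n x y -> psi01 x y = psi_n n x y.
Proof.
  apply (eventual_settled (fun k => psi_settled k x y) (fun k => psi_n k x y)).
  intros k; apply psi_settled_succ.
Qed.

Lemma chi01_settled n u w : chi_settled n u w -> chi01 u w = chi_n n u w.
Proof.
  apply (eventual_settled (fun k => chi_settled k u w) (fun k => chi_n k u w)).
  intros k; apply chi_settled_succ.
Qed.

Lemma psi01_diag x : psi01 x x = 0.
Proof. apply (eventual_ind (fun v => v = 0)). intros n; apply psi_n_diag. Qed.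

Lemma psi01_nonneg x y : 0 <= psi01 x y.
Proof. apply (eventual_ind (Rle 0)). intros n; apply psi_n_nonneg. Qed.

Lemma psi01_lt_1 x y : y < 1 -> psi01 x y < 1.
Proof. intros Hy. apply (eventual_ind (fun v => v < 1)). intros n; apply psi_n_lt_1, Hy. Qed.

Lemma chi01_zero u : chi01 u 0 = u.
Proof. apply (eventual_ind (fun v => v = u)). intros n; apply chi_n_zero. Qed.

Lemma chi01_ge u w : u <= chi01 u w.
Proof. apply (eventual_ind (Rle u)). intros n; apply chi_n_ge. Qed.

Lemma chi01_lt_1 u w : u < 1 -> w < 1 -> chi01 u w < 1.
Proof. intros Hu Hw. apply (eventual_ind (fun v => v < 1)). intros n; apply chi_n_lt_1; assumption. Qed.

Lemma psi01_chi01 u w : 0 <= u < 1 -> 0 <= w < 1 -> psi01 u (chi01 u w) = w.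
Proof.
  intros Hu Hw. destruct (Req_dec w 0) as [->|Hw0].
  - rewrite chi01_zero. apply psi01_diag.
  - destruct (chi_settled_exists u w) as [n Hn]; [lra | lra|].
    destruct (psi_n_chi_n n u w Hn Hu Hw) as [HS HE].
    rewrite (chi01_settled n), (psi01_settled n); assumption.
Qed.

Lemma chi01_psi01 x y : 0 <= x <= y -> y < 1 -> chi01 x (psi01 x y) = y.
Proof.
  intros Hxy Hy. destruct (Req_dec x y) as [<-|Hne].
  - rewrite psi01_diag. apply chi01_zero.
  - destruct (psi_settled_exists x y) as [n Hn]; [lra | lra | lra|].
    destruct (chi_n_psi_n n x y Hn) as [HS HE]; [lra | lra|].
    rewrite (psi01_settled n), (chi01_settled n); assumption.
Qed.

Lemma psi01_right_cont x y : 0 <= x <= y -> y < 1 -> forall eps, 0 < eps ->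
  sorg_nbhd2 x y (fun s t => s <= t -> psi01 x y <= psi01 s t < psi01 x y + eps).
Proof.
  intros Hxy Hy eps Heps. destruct (Req_dec x y) as [<-|Hne].
  - destruct (pow_half_lt eps Heps) as [k Hk].
    apply (sorg_nbhd2_impl _ _ _ _ (psi_n_small_near_diag k x ltac:(lra))).
    intros s t _ _ Hsmall Hst. rewrite psi01_diag.
    pose proof (psi01_nonneg s t).
    assert (psi01 s t < (/2) ^ k) by (apply (eventual_ind (fun v => v < (/2) ^ k)), Hsmall, Hst). lra.
  - destruct (psi_settled_exists x y) as [n Hn]; [lra | lra | lra|].
    apply (sorg_nbhd2_impl _ _ _ _ (psi_n_right_cont n x y Hn eps Heps)).
    intros s t _ _ [HS Hv] _. rewrite (psi01_settled n x y), (psi01_settled n s t); assumption.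
Qed.

Lemma chi01_right_cont u w : 0 <= u < 1 -> 0 <= w < 1 -> forall eps, 0 < eps ->
  sorg_nbhd2 u w (fun s t => chi01 u w <= chi01 s t < chi01 u w + eps).
Proof.
  intros Hu Hw eps Heps. destruct (Req_dec w 0) as [->|Hw0].
  - destruct (pow_half_lt eps Heps) as [k Hk].
    apply (sorg_nbhd2_impl _ _ _ _ (chi_n_small_near_zero k u Hu)).
    intros s t Hs _ Hsmall. rewrite chi01_zero.
    pose proof (chi01_ge s t).
    assert (chi01 s t < u + (/2) ^ k) by (apply (eventual_ind (fun v => v < u + (/2) ^ k)), Hsmall). lra.
  - destruct (chi_settled_exists u w) as [n Hn]; [lra | lra|].
    apply (sorg_nbhd2_impl _ _ _ _ (chi_n_right_cont n u w Hn eps Heps)).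
    intros s t _ _ [HS Hv]. rewrite (chi01_settled n u w), (chi01_settled n s t); assumption.
Qed.

Definition zigzag (j : Z) : Z := if (j mod 2 =? 0)%Z then j / 2 else - ((j + 1) / 2).
Definition unzigzag (k : Z) : Z := if (0 <? k)%Z then 2 * k else - 2 * k - 1.

Lemma zigzag_neq0 j : (0 < j)%Z -> zigzag j <> 0%Z.
Proof.
  intros Hj. unfold zigzag.
  destruct (Z.eqb_spec (j mod 2) 0); Z.div_mod_to_equations; lia.
Qed.

Lemma unzigzag_zigzag j : (0 < j)%Z -> unzigzag (zigzag j) = j.
Proof.
  intros Hj. unfold zigzag, unzigzag.
  destruct (Z.eqb_spec (j mod 2) 0); destruct (Z.ltb_spec 0 (j / 2));
    destruct (Z.ltb_spec 0 (- ((j + 1) / 2))); Z.div_mod_to_equations; lia.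
Qed.

Lemma zigzag_unzigzag k : k <> 0%Z -> (0 < unzigzag k)%Z /\ zigzag (unzigzag k) = k.
Proof.
  intros Hk. unfold zigzag, unzigzag. destruct (Z.ltb_spec 0 k).
  - split; [lia|]. destruct (Z.eqb_spec ((2 * k) mod 2) 0); Z.div_mod_to_equations; lia.
  - split; [lia|]. destruct (Z.eqb_spec ((- 2 * k - 1) mod 2) 0); Z.div_mod_to_equations; lia.
Qed.

Definition psi (x y : R) : R :=
  if Z.eq_dec (Zfloor y) (Zfloor x) then psi01 (x - IZR (Zfloor x)) (y - IZR (Zfloor x))
  else IZR (zigzag (Zfloor y - Zfloor x)) + (y - IZR (Zfloor y)).

Definition chi (u w : R) : R :=
  if Z.eq_dec (Zfloor w) 0 then IZR (Zfloor u) + chi01 (u - IZR (Zfloor u)) w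
  else IZR (Zfloor u) + IZR (unzigzag (Zfloor w)) + (w - IZR (Zfloor w)).

Lemma chi_ge u w : u <= chi u w.
Proof.
  unfold chi. destruct (Zfloor_bound u), (Zfloor_bound w).
  destruct (Z.eq_dec (Zfloor w) 0) as [E|E].
  - pose proof (chi01_ge (u - IZR (Zfloor u)) w). lra.
  - destruct (zigzag_unzigzag _ E) as [Hpos _].
    assert (Hge1 : (1 <= unzigzag (Zfloor w))%Z) by lia. apply IZR_le in Hge1. lra.
Qed.

Lemma chi_psi x y : x <= y -> chi x (psi x y) = y.
Proof.
  intros Hxy. destruct (Zfloor_bound x), (Zfloor_bound y).
  pose proof (Zfloor_le x y Hxy).
  unfold psi. destruct (Z.eq_dec (Zfloor y) (Zfloor x)) as [E|E].
  - rewrite E in *. set (n := Zfloor x) in *.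
    pose proof (psi01_nonneg (x - IZR n) (y - IZR n)).
    pose proof (psi01_lt_1 (x - IZR n) (y - IZR n) ltac:(lra)).
    unfold chi. rewrite (Zfloor_eq 0) by (simpl; lra).
    destruct (Z.eq_dec 0 0) as [_|]; [|congruence]. fold n.
    rewrite chi01_psi01 by lra. lra.
  - assert (Hj : (0 < Zfloor y - Zfloor x)%Z) by lia.
    pose proof (zigzag_neq0 _ Hj) as Hz. pose proof (unzigzag_zigzag _ Hj) as Hu.
    unfold chi. rewrite (Zfloor_eq (zigzag (Zfloor y - Zfloor x))) by lra.
    destruct (Z.eq_dec (zigzag (Zfloor y - Zfloor x)) 0); [contradiction|].
    rewrite Hu, minus_IZR. lra.
Qed.

Lemma psi_chi u w : psi u (chi u w) = w.
Proof.
  destruct (Zfloor_bound u), (Zfloor_bound w).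
  unfold chi. destruct (Z.eq_dec (Zfloor w) 0) as [E|E].
  - rewrite E in *. set (n := Zfloor u) in *.
    pose proof (chi01_ge (u - IZR n) w).
    pose proof (chi01_lt_1 (u - IZR n) w ltac:(lra) ltac:(lra)).
    unfold psi. rewrite (Zfloor_eq n (IZR n + _)) by lra. fold n.
    destruct (Z.eq_dec n n) as [_|]; [|congruence].
    replace (IZR n + chi01 (u - IZR n) w - IZR n) with (chi01 (u - IZR n) w) by ring.
    apply psi01_chi01; lra.
  - destruct (zigzag_unzigzag _ E) as [Hpos Hzu].
    set (n := Zfloor u) in *. set (k := Zfloor w) in *.
    unfold psi. rewrite (Zfloor_eq (n + unzigzag k)) by (rewrite plus_IZR; lra).
    fold n. destruct (Z.eq_dec (n + unzigzag k) n); [lia|].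
    replace (n + unzigzag k - n)%Z with (unzigzag k) by lia.
    rewrite Hzu, plus_IZR. lra.
Qed.

Lemma psi_right_cont x y : x <= y -> forall eps, 0 < eps ->
  sorg_nbhd2 x y (fun s t => s <= t -> psi x y <= psi s t < psi x y + eps).
Proof.
  intros Hxy eps Heps. destruct (Zfloor_bound x), (Zfloor_bound y).
  pose proof (sorg_nbhd2_and _ _ _ _ (sorg_nbhd2_fst x y _ (Zfloor_sorg_nbhd x))
                (sorg_nbhd2_snd x y _ (Zfloor_sorg_nbhd y))) as Hfloor.
  unfold psi. destruct (Z.eq_dec (Zfloor y) (Zfloor x)) as [E|E].
  - set (n := Zfloor x) in *. rewrite E in *.
    pose proof (sorg_nbhd2_shift (IZR n) x y _
                  (psi01_right_cont (x - IZR n) (y - IZR n) ltac:(lra) ltac:(lra) eps Heps)) as Hcell.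
    apply (sorg_nbhd2_impl _ _ _ _ (sorg_nbhd2_and _ _ _ _ Hfloor Hcell)).
    intros s t _ _ [[Hs Ht] Hv] Hst. rewrite Hs, Ht.
    destruct (Z.eq_dec n n) as [_|]; [|congruence]. apply Hv. lra.
  - apply (sorg_nbhd2_impl _ _ _ _ (sorg_nbhd2_and _ _ _ _ Hfloor
             (sorg_nbhd2_snd x y _ (sorg_nbhd_lt y (y + eps) ltac:(lra))))).
    intros s t _ Ht [[Hfs Hft] Hte] _. rewrite Hfs, Hft.
    destruct (Z.eq_dec (Zfloor y) (Zfloor x)); [contradiction | lra].
Qed.

Lemma chi_right_cont u w eps : 0 < eps ->
  sorg_nbhd2 u w (fun s t => chi u w <= chi s t < chi u w + eps).
Proof.
  intros Heps. destruct (Zfloor_bound u), (Zfloor_bound w).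
  pose proof (sorg_nbhd2_and _ _ _ _ (sorg_nbhd2_fst u w _ (Zfloor_sorg_nbhd u))
                (sorg_nbhd2_snd u w _ (Zfloor_sorg_nbhd w))) as Hfloor.
  unfold chi. destruct (Z.eq_dec (Zfloor w) 0) as [E|E].
  - set (n := Zfloor u) in *. rewrite E in *.
    pose proof (sorg_nbhd2_shift_fst (IZR n) u w _
                  (chi01_right_cont (u - IZR n) w ltac:(lra) ltac:(simpl in *; lra) eps Heps)) as Hcell.
    apply (sorg_nbhd2_impl _ _ _ _ (sorg_nbhd2_and _ _ _ _ Hfloor Hcell)).
    intros s t _ _ [[Hs Ht] Hv]. rewrite Hs, Ht.
    destruct (Z.eq_dec 0 0) as [_|]; [|congruence]. lra.
  - apply (sorg_nbhd2_impl _ _ _ _ (sorg_nbhd2_and _ _ _ _ Hfloor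
             (sorg_nbhd2_snd u w _ (sorg_nbhd_lt w (w + eps) ltac:(lra))))).
    intros s t _ Ht [[Hfs Hft] Hte]. rewrite Hfs, Hft.
    destruct (Z.eq_dec (Zfloor w) 0); [contradiction | lra].
Qed.

Notation sorgenfrey_plane := (prod_space Sorgenfrey Sorgenfrey).

Lemma plane_open_sorg_nbhd (W : sorgenfrey_plane -> Prop) x y :
  is_open sorgenfrey_plane W -> W (x, y) -> sorg_nbhd2 x y (fun s t => W (s, t)).
Proof.
  intros HW Hxy. destruct (HW (x, y) Hxy) as [U [V [HU [HV [Hx [Hy HUV]]]]]].
  pose proof (sorg_nbhd2_and _ _ _ _ (sorg_nbhd2_fst x y _ (sorg_nbhd_open U x HU Hx))
                (sorg_nbhd2_snd x y _ (sorg_nbhd_open V y HV Hy))) as HUV'.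
  apply (sorg_nbhd2_impl _ _ _ _ HUV'). intros s t _ _ [Hs Ht]. apply (HUV (s, t)); assumption.
Qed.

Lemma plane_open_of_sorg_nbhd (W : sorgenfrey_plane -> Prop) :
  (forall x y, W (x, y) -> sorg_nbhd2 x y (fun s t => W (s, t))) -> is_open sorgenfrey_plane W.
Proof.
  intros HW [x y] Hxy. destruct (HW x y Hxy) as [d [Hd Hbox]].
  exists (fun s => x <= s < x + d), (fun t => y <= t < y + d).
  repeat split; try apply sorgenfrey_open_interval; simpl; try lra.
  intros [s t] Hs Ht. apply Hbox; assumption.
Qed.

Definition translate (a b : R) (p : R * R) : R * R := (fst p + a, snd p + b).

Lemma translate_continuous a b :
  @continuous sorgenfrey_plane sorgenfrey_plane (translate a b).
Proof.
  intros W HW. apply plane_open_of_sorg_nbhd. intros x y Hxy.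
  apply (sorg_nbhd2_comp (fun s _ => s + a) (fun _ t => t + b) x y (fun s t => W (s, t)));
    [intros; lra | intros; lra |].
  apply plane_open_sorg_nbhd; assumption.
Qed.

Lemma sorgenfrey_plane_homogeneous : homogeneous sorgenfrey_plane.
Proof.
  intros [x y] [x' y']. exists (translate (x' - x) (y' - y)). split.
  - exists (translate (x - x') (y - y')).
    repeat split; try apply translate_continuous;
      intros [s t]; unfold translate; simpl; f_equal; ring.
  - unfold translate; simpl. f_equal; ring.
Qed.

Definition pair (x y : R) : R -> Prop := fun t => t = x \/ t = y.

Lemma pair_closed x y : is_closed Sorgenfrey (pair x y).
Proof.
  apply sorgenfrey_open_nbhd. intros t Ht.
  assert (Htx : t <> x) by (intros ->; apply Ht; left; reflexivity).
  assert (Hty : t <> y) by (intros ->; apply Ht; right; reflexivity).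
  apply (sorg_nbhd_impl _ _ _ (sorg_nbhd_and _ _ _ (sorg_nbhd_neq t x Htx) (sorg_nbhd_neq t y Hty))).
  intros s [Hx Hy] [E|E]; contradiction.
Qed.

Lemma pair_card x y : card_1_or_2 (pair x y).
Proof.
  split; [exists x; left; reflexivity|].
  intros a b c [->| ->] [->| ->] [->| ->]; auto.
Qed.

Definition CL_pair (x y : R) : CL_carrier Sorgenfrey := exist _ (pair x y) (pair_closed x y).
Definition F2_pair (x y : R) : F2 Sorgenfrey := exist _ (CL_pair x y) (pair_card x y).
Definition F2_set (B : F2 Sorgenfrey) : R -> Prop := proj1_sig (proj1_sig B).

Lemma card_1_or_2_pair (A : R -> Prop) : card_1_or_2 A ->
  exists p : R * R, fst p <= snd p /\ forall t, A t <-> pair (fst p) (snd p) t.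
Proof.
  intros [[a Ha] H3]. destruct (classic (exists b, A b /\ b <> a)) as [[b [Hb Hba]]|Hone].
  - assert (Hab : forall t, A t <-> pair a b t).
    { intros t. split; [|intros [-> | ->]; assumption].
      intros Ht. destruct (H3 a b t Ha Hb Ht) as [E|[E|E]]; [congruence | left | right]; auto. }
    destruct (Rle_dec a b); [exists (a, b) | exists (b, a)]; simpl; split; try lra;
      intros t; rewrite Hab; unfold pair; tauto.
  - exists (a, a). simpl. split; [lra|]. intros t. split; [|intros [-> | ->]; assumption].
    intros Ht. left. apply NNPP. intros Hta. apply Hone. exists t. auto.
Qed.

Definition F2_ends (B : F2 Sorgenfrey) : R * R :=
  proj1_sig (constructive_indefinite_description _ (card_1_or_2_pair _ (proj2_sig B))).

Lemma F2_ends_spec B : fst (F2_ends B) <= snd (F2_ends B) /\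
  forall t, F2_set B t <-> pair (fst (F2_ends B)) (snd (F2_ends B)) t.
Proof. unfold F2_ends. destruct (constructive_indefinite_description _ _). exact a. Qed.

Lemma F2_ext (B1 B2 : F2 Sorgenfrey) : (forall t, F2_set B1 t <-> F2_set B2 t) -> B1 = B2.
Proof.
  destruct B1 as [[A1 c1] k1], B2 as [[A2 c2] k2]. unfold F2_set. simpl. intros H.
  assert (A1 = A2) as <-.
  { apply functional_extensionality. intros t. apply propositional_extensionality, H. }
  rewrite (proof_irrelevance _ c1 c2), (proof_irrelevance _ k1 k2). reflexivity.
Qed.

Lemma F2_pair_ends B : F2_pair (fst (F2_ends B)) (snd (F2_ends B)) = B.
Proof. apply F2_ext. intros t. symmetry. apply F2_ends_spec. Qed.

Lemma F2_ends_pair x y : x <= y -> F2_ends (F2_pair x y) = (x, y).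
Proof.
  intros Hxy. destruct (F2_ends_spec (F2_pair x y)) as [Hle Hiff].
  destruct (F2_ends (F2_pair x y)) as [a b]. simpl in *. unfold F2_set in Hiff. simpl in Hiff.
  pose proof (proj1 (Hiff x) (or_introl eq_refl)). pose proof (proj1 (Hiff y) (or_intror eq_refl)).
  pose proof (proj2 (Hiff a) (or_introl eq_refl)). pose proof (proj2 (Hiff b) (or_intror eq_refl)).
  unfold pair in *. f_equal; lra.
Qed.

Definition F2_nbhd (B : F2 Sorgenfrey) (Q : F2 Sorgenfrey -> Prop) : Prop :=
  exists l, Forall (vietoris_subbase Sorgenfrey) l /\ Forall (fun S => S (proj1_sig B)) l /\
    forall B', Forall (fun S => S (proj1_sig B')) l -> Q B'.

Lemma F2_open_of_nbhd (W : F2 Sorgenfrey -> Prop) :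
  (forall B, W B -> F2_nbhd B W) -> is_open (F2 Sorgenfrey) W.
Proof.
  intros HW.
  exists (fun C => exists l, Forall (vietoris_subbase Sorgenfrey) l /\ Forall (fun S => S C) l /\
                     forall B', Forall (fun S => S (proj1_sig B')) l -> W B').
  split.
  - intros C [l [Hl [HC HW']]]. exists l. repeat split; [assumption | assumption|].
    intros C' HC'. exists l. auto.
  - intros B. split; [apply HW | intros [l [_ [HB HW']]]; apply HW', HB].
Qed.

Lemma F2_ends_sorg_nbhd B (P : R -> R -> Prop) :
  sorg_nbhd2 (fst (F2_ends B)) (snd (F2_ends B)) P ->
  F2_nbhd B (fun B' => P (fst (F2_ends B')) (snd (F2_ends B'))).
Proof.
  destruct (F2_ends_spec B) as [Hle HB].
  set (x := fst (F2_ends B)) in *. set (y := snd (F2_ends B)) in *.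
  intros [e [He HP]].
  exists [(fun C : CL_carrier Sorgenfrey => forall t, proj1_sig C t -> x <= t < x + e \/ y <= t < y + e);
          (fun C : CL_carrier Sorgenfrey => exists t, proj1_sig C t /\ x <= t < x + e);
          (fun C : CL_carrier Sorgenfrey => exists t, proj1_sig C t /\ y <= t < y + e)].
  repeat split.
  - repeat apply Forall_cons; [| | | constructor].
    + exists (fun t => x <= t < x + e \/ y <= t < y + e). split; [|left; tauto].
      intros t [Ht|Ht]; [exists x, (x + e) | exists y, (y + e)]; split; auto.
    + exists (fun t => x <= t < x + e). split; [apply sorgenfrey_open_interval | right; tauto].
    + exists (fun t => y <= t < y + e). split; [apply sorgenfrey_open_interval | right; tauto].
  - repeat apply Forall_cons; [| | | constructor].
    + intros t Ht. apply HB in Ht. destruct Ht as [-> | ->]; [left | right]; lra.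
    + exists x. split; [apply HB; left; reflexivity | lra].
    + exists y. split; [apply HB; right; reflexivity | lra].
  - intros B' HB'.
    inversion_clear HB' as [|? ? Hcov HB2]. inversion_clear HB2 as [|? ? Hmeetx HB3].
    inversion_clear HB3 as [|? ? Hmeety _].
    destruct Hmeetx as [s [Hs Hsx]], Hmeety as [t [Ht Hty]].
    destruct (F2_ends_spec B') as [Hle' HB'set].
    assert (Ha := Hcov _ (proj2 (HB'set _) (or_introl eq_refl))).
    assert (Hb := Hcov _ (proj2 (HB'set _) (or_intror eq_refl))).
    apply HB'set in Hs. apply HB'set in Ht. unfold pair in *. apply HP; lra.
Qed.

Definition F2_to_plane (B : F2 Sorgenfrey) : sorgenfrey_plane :=
  (fst (F2_ends B), psi (fst (F2_ends B)) (snd (F2_ends B))).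

Definition plane_to_F2 (p : sorgenfrey_plane) : F2 Sorgenfrey :=
  F2_pair (fst p) (chi (fst p) (snd p)).

Lemma F2_to_plane_continuous : continuous F2_to_plane.
Proof.
  intros V HV. apply F2_open_of_nbhd. intros B HB.
  destruct (F2_ends_spec B) as [Hle _].
  destruct (F2_ends_sorg_nbhd B (fun s t => s <= t -> V (s, psi s t))) as [l [Hl [HBl Himp]]].
  - apply (sorg_nbhd2_graph psi (fun s t => s <= t) (fun s t => V (s, t))).
    + apply psi_right_cont, Hle.
    + apply plane_open_sorg_nbhd; assumption.
  - exists l. repeat split; [assumption | assumption|].
    intros B' HB'. apply (Himp B' HB'), F2_ends_spec.
Qed.

Lemma CL_pair_sorg_nbhd (S : CL_carrier Sorgenfrey -> Prop) x y :
  vietoris_subbase Sorgenfrey S -> S (CL_pair x y) -> sorg_nbhd2 x y (fun s t => S (CL_pair s t)).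
Proof.
  intros [U [HU [Hsub|Hmeet]]] HS.
  - pose proof (proj1 (Hsub _) HS) as HxyU.
    assert (Hx : U x) by (apply HxyU; left; reflexivity).
    assert (Hy : U y) by (apply HxyU; right; reflexivity).
    apply (sorg_nbhd2_impl _ _ _ _ (sorg_nbhd2_and _ _ _ _
      (sorg_nbhd2_fst x y _ (sorg_nbhd_open U x HU Hx)) (sorg_nbhd2_snd x y _ (sorg_nbhd_open U y HU Hy)))).
    intros s t _ _ [Hs Ht]. apply (proj2 (Hsub _)). intros r [-> | ->]; assumption.
  - destruct (proj1 (Hmeet _) HS) as [r [[-> | ->] Hr]].
    + apply (sorg_nbhd2_impl _ _ _ _ (sorg_nbhd2_fst x y _ (sorg_nbhd_open U x HU Hr))).
      intros s t _ _ Hs. apply (proj2 (Hmeet _)). exists s. split; [left; reflexivity | exact Hs].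
    + apply (sorg_nbhd2_impl _ _ _ _ (sorg_nbhd2_snd x y _ (sorg_nbhd_open U y HU Hr))).
      intros s t _ _ Ht. apply (proj2 (Hmeet _)). exists t. split; [right; reflexivity | exact Ht].
Qed.

Lemma CL_pair_sorg_nbhd_list l x y :
  Forall (vietoris_subbase Sorgenfrey) l -> Forall (fun S => S (CL_pair x y)) l ->
  sorg_nbhd2 x y (fun s t => Forall (fun S => S (CL_pair s t)) l).
Proof.
  induction l as [|S l IH]; intros Hl Hxy.
  - exists 1. split; [lra|]. constructor.
  - inversion Hl as [|? ? HS Hl']; inversion Hxy as [|? ? HSxy Hxy']; subst.
    apply (sorg_nbhd2_impl _ _ _ _ (sorg_nbhd2_and _ _ _ _
      (CL_pair_sorg_nbhd S x y HS HSxy) (IH Hl' Hxy'))).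
    intros s t _ _ [Hs Ht]. constructor; assumption.
Qed.

Lemma plane_to_F2_continuous : continuous plane_to_F2.
Proof.
  intros W [V [HV HW]]. apply plane_open_of_sorg_nbhd. intros u w Huw.
  apply HW in Huw. destruct (HV _ Huw) as [l [Hl [Hin Himp]]].
  assert (Hchi : forall eps, 0 < eps ->
            sorg_nbhd2 u w (fun s t => True -> chi u w <= chi s t < chi u w + eps)).
  { intros eps Heps. apply (sorg_nbhd2_impl _ _ _ _ (chi_right_cont u w eps Heps)). auto. }
  apply (sorg_nbhd2_impl _ _ _ _ (sorg_nbhd2_graph chi (fun _ _ => True) _ u w Hchi
           (CL_pair_sorg_nbhd_list l _ _ Hl Hin))).
  intros s t _ _ Hst. apply HW, Himp, Hst. exact I.
Qed.

Lemma F2_sorgenfrey_homeomorphic_plane : homeomorphic (F2 Sorgenfrey) sorgenfrey_plane.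
Proof.
  exists F2_to_plane, plane_to_F2. repeat split.
  - intros B. destruct (F2_ends_spec B) as [Hle _].
    unfold F2_to_plane, plane_to_F2. simpl. rewrite chi_psi by exact Hle. apply F2_pair_ends.
  - intros [u w]. unfold F2_to_plane, plane_to_F2. simpl.
    rewrite F2_ends_pair by apply chi_ge. simpl. rewrite psi_chi. reflexivity.
  - apply F2_to_plane_continuous.
  - apply plane_to_F2_continuous.
Qed.

Theorem theorem1p2 :
  homeomorphic (F2 Sorgenfrey) (prod_space Sorgenfrey Sorgenfrey) /\
  homogeneous (F2 Sorgenfrey).
Proof.
  split.
  - exact F2_sorgenfrey_homeomorphic_plane.
  - exact (homogeneous_homeomorphic _ _ F2_sorgenfrey_homeomorphic_plane sorgenfrey_plane_homogeneous).
Qed.
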